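(* Let $N_1,N_3,J\in\mathbb{N}$ and let $\hat{\mathcal{X}}\in\mathbb{R}^{N_1\times J\times N_3}$ be a real third-order tensor with frontal slices $\hat{\mathcal{X}}_j\in\mathbb{R}^{N_1\times N_3}$ ($j=1,\dots,J$), where $(\hat{\mathcal{X}}_j)_{ik}=\hat{\mathcal{X}}_{ijk}$. Consider all factorizations of the form $\hat{\mathcal{X}}_j=\mathbf{U}\mathbf{R}_j\mathbf{V}^\top$ for all $j=1,\dots,J$, where $D\in\mathbb{N}$ is arbitrary, $\mathbf{U}\in\mathbb{R}^{N_1\times D}$, $\mathbf{V}\in\mathbb{R}^{N_3\times D}$, and each $\mathbf{R}_j\in\mathbb{R}^{D\times D}$ is a real diagonal matrix. Then $$\min_{\substack{D,\ \mathbf{U},\mathbf{V},\mathbf{R}_1,\dots,\mathbf{R}_J:\\ \hat{\mathcal{X}}_j=\mathbf{U}\mathbf{R}_j\mathbf{V}^\top\ \forall j}}\ \frac{1}{4\sqrt{J}}\sum_{j=1}^{J}\Big(\|\mathbf{U}\mathbf{R}_j\|_F^2+\|\mathbf{V}\|_F^2+\|\mathbf{V}\mathbf{R}_j^\top\|_F^2+\|\mathbf{U}\|_F^2\Big)=\|\hat{\mathcal{X}}\|_*.$$ Moreover, every factorization attaining this minimum satisfies, for every $d\in\{1,\dots,D\}$, $$\|\mathbf{u}_{:d}\|_2\|\mathbf{r}_{:d}\|_2=\sqrt{J}\,\|\mathbf{v}_{:d}\|_2\quad\text{and}\quad \|\mathbf{v}_{:d}\|_2\|\mathbf{r}_{:d}\|_2=\sqrt{J}\,\|\mathbf{u}_{:d}\|_2,$$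 where $\mathbf{u}_{:d}$, $\mathbf{v}_{:d}$ are the $d$-th columns of $\mathbf{U}$, $\mathbf{V}$, and $\mathbf{r}_{:d}\in\mathbb{R}^J$ is the $d$-th column of the matrix $\widetilde{\mathbf{R}}\in\mathbb{R}^{J\times D}$ defined by $\widetilde{\mathbf{R}}(j,d)=\mathbf{R}_j(d,d)$.
   Context: $\|\cdot\|_F$ is the Frobenius norm and $\|\cdot\|_2$ the Euclidean norm. The tensor nuclear 2-norm of a real tensor $\mathcal{A}\in\mathbb{R}^{n_1}\otimes\mathbb{R}^{n_2}\otimes\mathbb{R}^{n_3}$ is $\|\mathcal{A}\|_*=\min\big\{\sum_{i=1}^r\|\mathbf{a}_{1,i}\|_2\|\mathbf{a}_{2,i}\|_2\|\mathbf{a}_{3,i}\|_2:\ \mathcal{A}=\sum_{i=1}^r\mathbf{a}_{1,i}\otimes\mathbf{a}_{2,i}\otimes\mathbf{a}_{3,i},\ r\in\mathbb{N},\ \mathbf{a}_{k,i}\in\mathbb{R}^{n_k}\big\}$, where $\otimes$ is the outer product. Note that $\hat{\mathcal{X}}_j=\mathbf{U}\mathbf{R}_j\mathbf{V}^\top$ for all $j$ is equivalent to $\hat{\mathcal{X}}=\sum_{d=1}^D\mathbf{u}_{:d}\otimes\mathbf{r}_{:d}\otimes\mathbf{v}_{:d}$. *)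

From HB Require Import structures.
From mathcomp Require Import all_boot all_order all_algebra.
From mathcomp Require Import all_classical all_reals.
Set Implicit Arguments. Unset Strict Implicit. Unset Printing Implicit Defensive.
Import Order.TTheory GRing.Theory Num.Theory.
Local Open Scope ring_scope.
Local Open Scope classical_set_scope.

Definition tensor3 (R : realType) (n1 n2 n3 : nat) := 'I_n1 -> 'I_n2 -> 'I_n3 -> R.

Definition vnorm2 (R : realType) (n : nat) (a : 'I_n -> R) : R :=
  Num.sqrt (\sum_(i < n) a i ^+ 2).

Definition frob2 (R : realType) (m n : nat) (A : 'M[R]_(m, n)) : R :=
  \sum_(i < m) \sum_(j < n) A i j ^+ 2.

Definition is_cp_decomp (R : realType) (n1 n2 n3 r : nat) (X : tensor3 R n1 n2 n3)
  (a1 : 'I_r -> 'I_n1 -> R) (a2 : 'I_r -> 'I_n2 -> R) (a3 : 'I_r -> 'I_n3 -> R) : Prop :=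
  forall i j k, X i j k = \sum_(l < r) a1 l i * a2 l j * a3 l k.

(* Tensor nuclear 2-norm: the minimum (here: infimum; the minimum is attained)
   of sum_l ||a1_l|| ||a2_l|| ||a3_l|| over all rank-one decompositions. *)
Definition tnuclear (R : realType) (n1 n2 n3 : nat) (X : tensor3 R n1 n2 n3) : R :=
  inf [set c : R | exists (r : nat) (a1 : 'I_r -> 'I_n1 -> R) (a2 : 'I_r -> 'I_n2 -> R)
                         (a3 : 'I_r -> 'I_n3 -> R),
         is_cp_decomp X a1 a2 a3 /\
         c = \sum_(l < r) vnorm2 (a1 l) * vnorm2 (a2 l) * vnorm2 (a3 l)].

Definition slice (R : realType) (n1 J n3 : nat) (X : tensor3 R n1 J n3) (j : 'I_J)
  : 'M[R]_(n1, n3) := \matrix_(i, k) X i j k.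

Definition is_factorization (R : realType) (n1 J n3 D : nat) (X : tensor3 R n1 J n3)
  (U : 'M[R]_(n1, D)) (V : 'M[R]_(n3, D)) (Rj : 'I_J -> 'M[R]_D) : Prop :=
  (forall j, is_diag_mx (Rj j)) /\ (forall j, slice X j = U *m Rj j *m V^T).

Definition objective (R : realType) (n1 J n3 D : nat)
  (U : 'M[R]_(n1, D)) (V : 'M[R]_(n3, D)) (Rj : 'I_J -> 'M[R]_D) : R :=
  (4 * Num.sqrt (J%:R))^-1 *
  \sum_(j < J) (frob2 (U *m Rj j) + frob2 V + frob2 (V *m (Rj j)^T) + frob2 U).

Definition colnorm (R : realType) (m D : nat) (A : 'M[R]_(m, D)) (d : 'I_D) : R :=
  vnorm2 (fun i => A i d).
Definition rnorm (R : realType) (J D : nat) (Rj : 'I_J -> 'M[R]_D) (d : 'I_D) : R :=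
  vnorm2 (fun j => Rj j d d).

From HB Require Import structures.
From mathcomp Require Import all_boot all_order all_algebra.
From mathcomp Require Import all_classical all_reals all_analysis.
From mathcomp Require Import ring.
Import Order.TTheory GRing.Theory Num.Theory.
Import numFieldNormedType.Exports.
Set Implicit Arguments. Unset Strict Implicit. Unset Printing Implicit Defensive.
Local Open Scope ring_scope.
Local Open Scope classical_set_scope.

(* With s = sqrt J and, for a column d, a = ||u_d||, r = ||r_d||, b = ||v_d||,
     a^2 r^2 + s^2 b^2 + b^2 r^2 + s^2 a^2 = 4 s a r b + (a r - s b)^2 + (b r - s a)^2,
   so the objective is sum_d a r b plus a nonnegative balance defect, while the
   columns of a factorization form a CP decomposition of cost sum_d a r b, which is
   at least ||X||_*.  At a minimizer the defect vanishes: this is the balance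
   condition.  Conversely the infimum defining ||X||_* is attained: Caratheodory
   reduces every decomposition to rank N1 J N3 without increasing its cost, a
   rescaling bounds its factors, and the cost is continuous on the resulting compact
   set.  Rescaling each term of an optimal decomposition to factor norms
   (sqrt(c/s), s, sqrt(c/s)), c its cost, gives a factorization with zero defect. *)

Section EuclideanNorm.
Variable R : realType.
Implicit Types n : nat.

Lemma vnorm2_ge0 n (a : 'I_n -> R) : 0 <= vnorm2 a.
Proof. exact: sqrtr_ge0. Qed.

Lemma sqr_vnorm2 n (a : 'I_n -> R) : vnorm2 a ^+ 2 = \sum_i a i ^+ 2.
Proof. by rewrite sqr_sqrtr // sumr_ge0 // => i _; exact: sqr_ge0. Qed.

Lemma vnorm2Z n (g : R) (a : 'I_n -> R) :
  vnorm2 (fun i => g * a i) = `|g| * vnorm2 a.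
Proof.
rewrite /vnorm2 (eq_bigr (fun i => g ^+ 2 * a i ^+ 2)) => [|i _]; last exact: exprMn.
by rewrite -mulr_sumr sqrtrM ?sqr_ge0 // sqrtr_sqr.
Qed.

Lemma vnorm2_0 n : vnorm2 (fun _ : 'I_n => 0 : R) = 0.
Proof. by rewrite /vnorm2 big1 ?sqrtr0 // => i _; rewrite expr0n. Qed.

Lemma vnorm2_dim0 n (a : 'I_n -> R) : n = 0%N -> vnorm2 a = 0.
Proof. by move=> n0; subst n; rewrite /vnorm2 big_ord0 sqrtr0. Qed.

Lemma ler_abs_vnorm2 n (a : 'I_n -> R) i : `|a i| <= vnorm2 a.
Proof.
rewrite -sqrtr_sqr ler_sqrt ?sumr_ge0 // => [|j _]; last exact: sqr_ge0.
by rewrite (bigD1 i) //= lerDl sumr_ge0 // => j _; exact: sqr_ge0.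
Qed.

Lemma vnorm2_eq0 n (a : 'I_n -> R) : vnorm2 a = 0 -> forall i, a i = 0.
Proof. by move=> a0 i; apply/normr0_eq0/le_anti; rewrite normr_ge0 -a0 ler_abs_vnorm2. Qed.

End EuclideanNorm.

Section RankOne.
Variables (R : realType) (n1 n2 n3 : nat).

Definition rank_one_cost (a1 : 'I_n1 -> R) (a2 : 'I_n2 -> R) (a3 : 'I_n3 -> R) : R :=
  vnorm2 a1 * vnorm2 a2 * vnorm2 a3.

Lemma rank_one_cost_ge0 a1 a2 a3 : 0 <= rank_one_cost a1 a2 a3.
Proof. by rewrite !mulr_ge0 ?vnorm2_ge0. Qed.

Lemma rank_one_cost_eq0 a1 a2 a3 : rank_one_cost a1 a2 a3 = 0 ->
  forall i j k, a1 i * a2 j * a3 k = 0.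
Proof.
move=> /eqP; rewrite !mulf_eq0 -orbA => /or3P[] /eqP /vnorm2_eq0 a0 i j k.
- by rewrite a0 !mul0r.
- by rewrite a0 mulr0 mul0r.
- by rewrite a0 mulr0.
Qed.

Lemma rank_one_rescale a1 a2 a3 (x y z : R) :
  let m := rank_one_cost a1 a2 a3 in
  (m != 0 -> [/\ 0 < x, 0 < y, 0 < z & x * y * z = m]) ->
  exists (b1 : 'I_n1 -> R) (b2 : 'I_n2 -> R) (b3 : 'I_n3 -> R),
    (forall i j k, b1 i * b2 j * b3 k = a1 i * a2 j * a3 k) /\
    (vnorm2 b1, vnorm2 b2, vnorm2 b3) = if m == 0 then (0, 0, 0) else (x, y, z).
Proof.
move=> m; have [m0 _|m0 /(_ isT) [x0 y0 z0 xyz]] := eqVneq m 0.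
  exists (fun _ => 0), (fun _ => 0), (fun _ => 0); rewrite !vnorm2_0; split => // i j k.
  by rewrite (rank_one_cost_eq0 m0) !mul0r.
have := m0; rewrite /m /rank_one_cost !mulf_eq0 !negb_or => /andP[/andP[p0 q0] w0].
exists (fun i => x / vnorm2 a1 * a1 i), (fun j => y / vnorm2 a2 * a2 j),
  (fun k => z / vnorm2 a3 * a3 k); split.
  move=> i j k; transitivity (x * y * z / m * (a1 i * a2 j * a3 k)).
    by rewrite /m /rank_one_cost; field; rewrite p0 q0 w0.
  by rewrite xyz divff // mul1r.
by rewrite !vnorm2Z !normrM !ger0_norm ?invr_ge0 ?vnorm2_ge0 ?ltW // !divfK.
Qed.

End RankOne.

Section CPDecomposition.
Variables (R : realType) (n1 n2 n3 : nat) (X : tensor3 R n1 n2 n3).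

Definition cp_cost r (a1 : 'I_r -> 'I_n1 -> R) (a2 : 'I_r -> 'I_n2 -> R)
  (a3 : 'I_r -> 'I_n3 -> R) : R :=
  \sum_(l < r) rank_one_cost (a1 l) (a2 l) (a3 l).

Lemma cp_cost_ge0 r (a1 : 'I_r -> 'I_n1 -> R) a2 a3 : 0 <= cp_cost a1 a2 a3.
Proof. by apply: sumr_ge0 => l _; exact: rank_one_cost_ge0. Qed.

Lemma rank_one_cost_le_cp_cost r (a1 : 'I_r -> 'I_n1 -> R) a2 a3 l :
  rank_one_cost (a1 l) (a2 l) (a3 l) <= cp_cost a1 a2 a3.
Proof.
rewrite /cp_cost (bigD1 l) //= lerDl.
by apply: sumr_ge0 => l' _; exact: rank_one_cost_ge0.
Qed.

Lemma tnuclear_le_cp_cost r (a1 : 'I_r -> 'I_n1 -> R) a2 a3 :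
  is_cp_decomp X a1 a2 a3 -> tnuclear X <= cp_cost a1 a2 a3.
Proof.
move=> aX; apply: ge_inf; last by exists r, a1, a2, a3.
by exists 0 => _ [r' [b1 [b2 [b3 [_ ->]]]]]; exact: cp_cost_ge0.
Qed.

Lemma cp_decomp_exists : exists r (a1 : 'I_r -> 'I_n1 -> R) a2 a3, is_cp_decomp X a1 a2 a3.
Proof.
pose e (t : 'I_#|{: 'I_n1 * 'I_n2 * 'I_n3}|) := enum_val t.
exists _, (fun t i => (i == (e t).1.1)%:R * X (e t).1.1 (e t).1.2 (e t).2),
  (fun t j => (j == (e t).1.2)%:R), (fun t k => (k == (e t).2)%:R).
move=> i j k; rewrite (bigD1 (enum_rank (i, j, k))) //= /e enum_rankK /= !eqxx !mulr1 mul1r.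
rewrite big1 ?addr0 // => t ht.
have : enum_val t != (i, j, k) by apply: contra ht => /eqP <-; rewrite enum_valK.
case: (enum_val t) => [[i' j'] k'] /=.
have [<-|_] := eqVneq i i'; last by rewrite !mul0r.
have [<-|_] := eqVneq j j'; last by rewrite mulr0 mul0r.
by have [<-|_] := eqVneq k k'; rewrite ?eqxx ?mulr0.
Qed.

Lemma cp_decomp_pad m r (a1 : 'I_r -> 'I_n1 -> R) a2 a3 : (r <= m)%N ->
  is_cp_decomp X a1 a2 a3 ->
  exists (b1 : 'I_m -> 'I_n1 -> R) b2 b3,
    is_cp_decomp X b1 b2 b3 /\ cp_cost b1 b2 b3 = cp_cost a1 a2 a3.
Proof.
move=> /subnKC <- aX; set k := (m - r)%N.
pose pad n (a : 'I_r -> 'I_n -> R) (l : 'I_(r + k)) : 'I_n -> R :=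
  if fintype.split l is inl l' then a l' else fun _ => 0.
have padl n a l : pad n a (lshift k l) = a l by rewrite /pad (unsplitK (inl l)).
have padr n a l : pad n a (rshift r l) = fun _ => 0 by rewrite /pad (unsplitK (inr l)).
exists (pad _ a1), (pad _ a2), (pad _ a3); split.
  move=> i j kk; rewrite aX big_split_ord /= [Y in _ + Y]big1 ?addr0 => [|l _].
    by apply: eq_bigr => l _; rewrite !padl.
  by rewrite !padr mulr0.
rewrite /cp_cost big_split_ord /= [Y in _ + Y]big1 ?addr0 => [|l _].
  by apply: eq_bigr => l _; rewrite !padl.
by rewrite !padr /rank_one_cost !vnorm2_0 mulr0.
Qed.

Lemma cp_decomp_remove_zero r (a1 : 'I_r.+1 -> 'I_n1 -> R) a2 a3 k :
  a1 k = (fun _ => 0) -> is_cp_decomp X a1 a2 a3 ->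
  exists (b1 : 'I_r -> 'I_n1 -> R) b2 b3,
    is_cp_decomp X b1 b2 b3 /\ cp_cost b1 b2 b3 = cp_cost a1 a2 a3.
Proof.
move=> ak0 aX; exists (a1 \o lift k), (a2 \o lift k), (a3 \o lift k); split.
  by move=> i j kk; rewrite aX (bigD1_ord k) //= ak0 !mul0r add0r.
by rewrite [RHS](bigD1_ord k) //= /rank_one_cost ak0 vnorm2_0 !mul0r add0r.
Qed.

Lemma rank_one_dependent r (a1 : 'I_r -> 'I_n1 -> R) (a2 : 'I_r -> 'I_n2 -> R)
    (a3 : 'I_r -> 'I_n3 -> R) : (n1 * n2 * n3 < r)%N ->
  exists al : 'I_r -> R, (exists l, al l != 0) /\
    forall i j k, \sum_l al l * (a1 l i * a2 l j * a3 l k) = 0.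
Proof.
move=> r_gt.
pose W : 'M[R]_(r, #|{: 'I_n1 * 'I_n2 * 'I_n3}|) := \matrix_(l, t)
  (let: (i, j, k) := enum_val t in a1 l i * a2 l j * a3 l k).
have /rowV0Pn [v /sub_kermxP vW v0] : kermx W != 0.
  rewrite kermx_eq0 /row_free; apply: contraTN r_gt => /eqP <-.
  by rewrite -leqNgt (leq_trans (rank_leq_col W)) // !card_prod !card_ord.
have [l vl] := rV0Pn _ v0.
exists (fun l => v 0 l); split; first by exists l.
move=> i j k; have := congr1 (fun A : 'rV_ _ => A 0 (enum_rank (i, j, k))) vW.
rewrite !mxE => vWijk; rewrite -[RHS]vWijk.
by apply: eq_bigr => l' _; rewrite mxE enum_rankK.
Qed.

Lemma exists_sign_pos_weight r (al c : 'I_r -> R) :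
  (exists l, al l != 0) -> (forall l, 0 <= c l) ->
  exists e : R, 0 <= \sum_l e * al l * c l /\ exists l, 0 < e * al l.
Proof.
move=> [l0 al0] c_ge0; pose S := \sum_l al l * c l.
have Se e : \sum_l e * al l * c l = e * S.
  by rewrite mulr_sumr; apply: eq_bigr => l _; rewrite mulrA.
have [S_ge0|S_lt0] := leP 0 S.
  have [/existsP [l al_gt0] | /existsPn al_le0] := boolP [exists l, 0 < al l].
    by exists 1; rewrite Se mul1r; split => //; exists l; rewrite mul1r.
  have {}al_le0 l : al l <= 0 by rewrite leNgt al_le0.
  have S0 : S = 0.
    by apply/le_anti; rewrite S_ge0 andbT; apply: sumr_le0 => l _; rewrite mulr_le0_ge0.
  exists (-1); rewrite Se S0 mulr0; split => //.
  by exists l0; rewrite mulN1r oppr_gt0 lt_neqAle al0 al_le0.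
exists (-1); rewrite Se mulN1r oppr_ge0 ltW //; split => //.
have [l al_lt0] : exists l, al l < 0.
  apply/existsP; apply: contraLR S_lt0 => /existsPn al_ge0; rewrite -leNgt.
  by apply: sumr_ge0 => l _; rewrite mulr_ge0 // leNgt al_ge0.
by exists l; rewrite mulN1r oppr_gt0.
Qed.

(* Caratheodory step: moving along a linear dependence of the rank-one terms
   does not increase the cost and kills the term of largest coefficient. *)
Lemma cp_decomp_rank_step r (a1 : 'I_r.+1 -> 'I_n1 -> R) a2 a3 :
  (n1 * n2 * n3 < r.+1)%N -> is_cp_decomp X a1 a2 a3 ->
  exists (b1 : 'I_r -> 'I_n1 -> R) b2 b3,
    is_cp_decomp X b1 b2 b3 /\ cp_cost b1 b2 b3 <= cp_cost a1 a2 a3.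
Proof.
move=> r_gt aX; have [al [al0 dep]] := rank_one_dependent a1 a2 a3 r_gt.
have [e [weighted_cost_ge0 [l0 el0]]] :=
  exists_sign_pos_weight al0 (fun l => rank_one_cost_ge0 (a1 l) (a2 l) (a3 l)).
pose be l := e * al l.
have [k _ be_max] := @arg_maxP _ _ _ l0 xpredT be isT.
have bk0 : 0 < be k by apply: lt_le_trans el0 (be_max l0 isT).
pose g l := 1 - be l / be k.
have g_ge0 l : 0 <= g l by rewrite subr_ge0 ler_pdivrMr // mul1r; exact: be_max.
pose a1' l i := g l * a1 l i.
have a'X : is_cp_decomp X a1' a2 a3.
  move=> i j kk; rewrite aX; apply/esym/eqP; rewrite -subr_eq0; apply/eqP.
  transitivity (- ((be k)^-1 * e * \sum_l al l * (a1 l i * a2 l j * a3 l kk))).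
    rewrite !mulr_sumr -sumrB -sumrN.
    by apply: eq_bigr => l _; rewrite /a1' /g /be; ring.
  by rewrite dep mulr0 oppr0.
have a'cost : cp_cost a1' a2 a3 <= cp_cost a1 a2 a3.
  have -> : cp_cost a1' a2 a3 = cp_cost a1 a2 a3 -
      (be k)^-1 * \sum_l e * al l * rank_one_cost (a1 l) (a2 l) (a3 l).
    rewrite /cp_cost mulr_sumr -sumrB; apply: eq_bigr => l _.
    by rewrite /rank_one_cost /a1' vnorm2Z ger0_norm // /g /be; ring.
  by rewrite lerBlDr lerDl mulr_ge0 // invr_ge0 ltW.
have a'k0 : a1' k = fun _ => 0.
  by apply: funext => i; rewrite /a1' /g divff ?gt_eqF // subrr mul0r.
have [b1 [b2 [b3 [bX bcost]]]] := cp_decomp_remove_zero a'k0 a'X.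
by exists b1, b2, b3; rewrite bcost.
Qed.

Lemma cp_decomp_rank_reduce r (a1 : 'I_r -> 'I_n1 -> R) a2 a3 :
  is_cp_decomp X a1 a2 a3 ->
  exists (b1 : 'I_(n1 * n2 * n3) -> 'I_n1 -> R) b2 b3,
    is_cp_decomp X b1 b2 b3 /\ cp_cost b1 b2 b3 <= cp_cost a1 a2 a3.
Proof.
have padded r' (c1 : 'I_r' -> 'I_n1 -> R) c2 c3 : (r' <= n1 * n2 * n3)%N ->
    is_cp_decomp X c1 c2 c3 -> exists (b1 : 'I_(n1 * n2 * n3) -> 'I_n1 -> R) b2 b3,
    is_cp_decomp X b1 b2 b3 /\ cp_cost b1 b2 b3 <= cp_cost c1 c2 c3.
  move=> r'_le /(cp_decomp_pad r'_le) [b1 [b2 [b3 [bX bcost]]]].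
  by exists b1, b2, b3; rewrite bcost.
elim: r a1 a2 a3 => [|r IH] a1 a2 a3 aX; first exact: padded.
have [r_le|r_gt] := leqP r.+1 (n1 * n2 * n3); first exact: padded.
have [b1 [b2 [b3 [bX bcost]]]] := cp_decomp_rank_step r_gt aX.
have [c1 [c2 [c3 [cX ccost]]]] := IH _ _ _ bX.
by exists c1, c2, c3; split => //; exact: le_trans ccost bcost.
Qed.

Lemma cp_decomp_rescale r (a1 : 'I_r -> 'I_n1 -> R) a2 a3 (x y z : 'I_r -> R) :
  is_cp_decomp X a1 a2 a3 ->
  (forall l, rank_one_cost (a1 l) (a2 l) (a3 l) != 0 ->
     [/\ 0 < x l, 0 < y l, 0 < z l & x l * y l * z l = rank_one_cost (a1 l) (a2 l) (a3 l)]) ->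
  exists b1 b2 b3, [/\ is_cp_decomp X b1 b2 b3, cp_cost b1 b2 b3 = cp_cost a1 a2 a3 &
    forall l, (vnorm2 (b1 l), vnorm2 (b2 l), vnorm2 (b3 l)) =
      if rank_one_cost (a1 l) (a2 l) (a3 l) == 0 then (0, 0, 0) else (x l, y l, z l)].
Proof.
move=> aX xyz.
have /fin_all_exists [b1 /fin_all_exists [b2 /fin_all_exists [b3 b_rescale]]] :=
  fun l => rank_one_rescale (xyz l).
exists b1, b2, b3; split => [i j k||l]; last by case: (b_rescale l).
- by rewrite aX; apply: eq_bigr => l _; case: (b_rescale l) => ->.
apply: eq_bigr => l _; have [_] := b_rescale l; rewrite /rank_one_cost.
have [m0 [-> -> ->]|m0 [-> -> ->]] := eqVneq (vnorm2 (a1 l) * vnorm2 (a2 l) * vnorm2 (a3 l)) 0.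
  by rewrite m0 !mul0r.
by case: (xyz l m0).
Qed.

Definition cp_bounded (C : R) r (a1 : 'I_r -> 'I_n1 -> R) (a2 : 'I_r -> 'I_n2 -> R)
  (a3 : 'I_r -> 'I_n3 -> R) : Prop :=
  [/\ forall l i, `|a1 l i| <= C, forall l j, `|a2 l j| <= C & forall l k, `|a3 l k| <= C].

Lemma cp_decomp_normalize r (a1 : 'I_r -> 'I_n1 -> R) a2 a3 (C : R) :
  is_cp_decomp X a1 a2 a3 -> cp_cost a1 a2 a3 <= C -> 1 <= C ->
  exists (b1 : 'I_r -> 'I_n1 -> R) b2 b3, [/\ is_cp_decomp X b1 b2 b3, cp_bounded C b1 b2 b3 &
    cp_cost b1 b2 b3 = cp_cost a1 a2 a3].
Proof.
move=> aX aC C1.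
have [|b1 [b2 [b3 [bX bcost bnorm]]]] := cp_decomp_rescale
  (x := fun l => rank_one_cost (a1 l) (a2 l) (a3 l)) (y := fun=> 1) (z := fun=> 1) aX.
  by move=> l m0; rewrite ltr01 !mulr1 lt_def m0 rank_one_cost_ge0.
exists b1, b2, b3; split => //.
have b_norm_le l : [/\ vnorm2 (b1 l) <= C, vnorm2 (b2 l) <= C & vnorm2 (b3 l) <= C].
  have C0 : 0 <= C by apply: le_trans C1; exact: ler01.
  move: (bnorm l); case: ifP => _ [-> -> ->]; split => //.
  exact: le_trans (rank_one_cost_le_cp_cost _ _ _ l) aC.
by split => l t; apply: le_trans (ler_abs_vnorm2 _ t) _; case: (b_norm_le l).
Qed.

End CPDecomposition.

Section RealContinuity.
Variables (R : realType) (T : topologicalType).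

Lemma continuous_sumr (I : Type) (s : seq I) (F : I -> T -> R) :
  (forall i, continuous (F i)) -> continuous (fun x => \sum_(i <- s) F i x).
Proof.
move=> Fc.
exact: (@continuous_big R I +%R 0 xpredT add_continuous T s F (fun i _ => Fc i)).
Qed.

Lemma continuous_mulr (f g : T -> R) :
  continuous f -> continuous g -> continuous (fun x => f x * g x).
Proof. by move=> fc gc x; exact: continuousM (fc x) (gc x). Qed.

Lemma continuous_vnorm2 n (f : T -> 'I_n -> R) :
  (forall i, continuous (fun x => f x i)) -> continuous (fun x => vnorm2 (f x)).
Proof.
move=> fc x; apply: (continuous_comp (f := fun x => \sum_i f x i ^+ 2)).
  by apply: continuous_sumr => i y; exact: (continuous_comp (fc i y) (@exprn_continuous R 2 _)).
exact: sqrt_continuous.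
Qed.

End RealContinuity.

Section Compactness.
Variables (R : realType) (n1 n2 n3 L : nat) (X : tensor3 R n1 n2 n3) (C : R).

(* Decompositions of rank [L] are encoded as the rows of an
   [L x (n1 + n2 + n3)] matrix, flattened to a row vector. *)
Local Notation space := 'rV[R]_(L * (n1 + n2 + n3)).

Let entry (v : space) l t := v 0 (mxvec_index l t).
Let dec1 (v : space) l i := entry v l (lshift n3 (lshift n2 i)).
Let dec2 (v : space) l j := entry v l (lshift n3 (rshift n1 j)).
Let dec3 (v : space) l k := entry v l (rshift (n1 + n2) k).
Let enc (a1 : 'I_L -> 'I_n1 -> R) (a2 : 'I_L -> 'I_n2 -> R) (a3 : 'I_L -> 'I_n3 -> R)
  : space := mxvec (row_mx (row_mx (\matrix_(l, i) a1 l i) (\matrix_(l, j) a2 l j))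
                           (\matrix_(l, k) a3 l k)).

Let dec_enc a1 a2 a3 :
  [/\ dec1 (enc a1 a2 a3) = a1, dec2 (enc a1 a2 a3) = a2 & dec3 (enc a1 a2 a3) = a3].
Proof.
by split; apply: funext => l; apply: funext => t;
  rewrite /dec1 /dec2 /dec3 /entry mxvecE ?row_mxEl ?row_mxEr mxE.
Qed.

Let entry_continuous l t : continuous (fun v : space => entry v l t).
Proof. exact: coord_continuous. Qed.

Let cost_continuous : continuous (fun v => cp_cost (dec1 v) (dec2 v) (dec3 v)).
Proof.
apply: continuous_sumr => l; apply: continuous_mulr; first apply: continuous_mulr.
all: by apply: continuous_vnorm2 => i; exact: entry_continuous.
Qed.

Let decomp_closed : closed [set v | is_cp_decomp X (dec1 v) (dec2 v) (dec3 v)].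
Proof.
have -> : [set v | is_cp_decomp X (dec1 v) (dec2 v) (dec3 v)] =
    \bigcap_i \bigcap_j \bigcap_k
      ((fun v => \sum_l dec1 v l i * dec2 v l j * dec3 v l k) @^-1` [set X i j k]).
  apply/seteqP; split => v vX; first by move=> i _ j _ k _; exact/esym/vX.
  by move=> i j k; exact/esym/(vX i I j I k I).
apply: closed_bigI => i _; apply: closed_bigI => j _; apply: closed_bigI => k _.
apply: preimage_closed; last exact: closed_eq.
move=> v _; apply: continuous_sumr => l.
by apply: continuous_mulr; [apply: continuous_mulr|]; exact: entry_continuous.
Qed.

Let box := [set v : space | forall t, `[-C, C] (v 0 t)].

Let box_compact : compact box.
Proof. by apply: (rV_compact (A := fun=> `[-C, C])) => t; exact: segment_compact. Qed.

Let itv_normE (x : R) : `[-C, C] x = (`|x| <= C).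
Proof. by rewrite /= in_itv /= ler_norml. Qed.

Let box_dec v : box v -> cp_bounded C (dec1 v) (dec2 v) (dec3 v).
Proof. by move=> vC; split => l i; rewrite -itv_normE; exact: vC. Qed.

Let enc_box a1 a2 a3 : cp_bounded C a1 a2 a3 -> box (enc a1 a2 a3).
Proof.
move=> [a1C a2C a3C] t; rewrite itv_normE.
case/mxvec_indexP: t => l t; rewrite mxvecE.
case: (split_ordP t) => [t' ->|k ->]; rewrite ?row_mxEl ?row_mxEr; last by rewrite mxE.
by case: (split_ordP t') => [i ->|j ->]; rewrite ?row_mxEl ?row_mxEr mxE.
Qed.

Lemma cp_bounded_cost_min :
  (exists (a1 : 'I_L -> 'I_n1 -> R) a2 a3, is_cp_decomp X a1 a2 a3 /\ cp_bounded C a1 a2 a3) ->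
  exists (a1 : 'I_L -> 'I_n1 -> R) a2 a3,
    (is_cp_decomp X a1 a2 a3 /\ cp_bounded C a1 a2 a3) /\
    forall (b1 : 'I_L -> 'I_n1 -> R) b2 b3, is_cp_decomp X b1 b2 b3 -> cp_bounded C b1 b2 b3 ->
      cp_cost a1 a2 a3 <= cp_cost b1 b2 b3.
Proof.
move=> [a1 [a2 [a3 [aX aC]]]].
have enc_admissible b1 b2 b3 : is_cp_decomp X b1 b2 b3 -> cp_bounded C b1 b2 b3 ->
    (box `&` [set v | is_cp_decomp X (dec1 v) (dec2 v) (dec3 v)]) (enc b1 b2 b3).
  move=> bX bC; split; first exact: enc_box.
  by case: (dec_enc b1 b2 b3) => d1 d2 d3; rewrite /= d1 d2 d3.
have [v /set_mem [vC vX] vmin] := compact_EVT_min (ex_intro _ _ (enc_admissible _ _ _ aX aC))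
  (compact_closedI box_compact decomp_closed) (continuous_subspaceT cost_continuous).
exists (dec1 v), (dec2 v), (dec3 v); split; first by split => //; exact: box_dec.
move=> b1 b2 b3 bX bC; have := vmin _ (mem_set (enc_admissible _ _ _ bX bC)).
by case: (dec_enc b1 b2 b3) => d1 d2 d3; rewrite d1 d2 d3.
Qed.

End Compactness.

Section NuclearNormAttained.
Variables (R : realType) (n1 n2 n3 : nat) (X : tensor3 R n1 n2 n3).

Lemma cp_cost_min_exists :
  exists r (a1 : 'I_r -> 'I_n1 -> R) a2 a3, is_cp_decomp X a1 a2 a3 /\
    forall r' (b1 : 'I_r' -> 'I_n1 -> R) b2 b3,
      is_cp_decomp X b1 b2 b3 -> cp_cost a1 a2 a3 <= cp_cost b1 b2 b3.
Proof.
have [r0 [t1 [t2 [t3 tX]]]] := cp_decomp_exists X.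
set C := cp_cost t1 t2 t3 + 1.
have C1 : 1 <= C by rewrite lerDr cp_cost_ge0.
have reduce r (b1 : 'I_r -> 'I_n1 -> R) b2 b3 :
    is_cp_decomp X b1 b2 b3 -> cp_cost b1 b2 b3 <= C ->
    exists (c1 : 'I_(n1 * n2 * n3) -> 'I_n1 -> R) c2 c3, [/\ is_cp_decomp X c1 c2 c3,
      cp_bounded C c1 c2 c3 & cp_cost c1 c2 c3 <= cp_cost b1 b2 b3].
  move=> bX bC; have [c1 [c2 [c3 [cX ccost]]]] := cp_decomp_rank_reduce bX.
  have [d1 [d2 [d3 [dX dC dcost]]]] := cp_decomp_normalize cX (le_trans ccost bC) C1.
  by exists d1, d2, d3; rewrite dcost.
have tC : cp_cost t1 t2 t3 <= C by rewrite lerDl.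
have [c1 [c2 [c3 [cX cC ccost]]]] := reduce _ _ _ _ tX tC.
have [|m1 [m2 [m3 [[mX mC] mmin]]]] := @cp_bounded_cost_min R n1 n2 n3 (n1 * n2 * n3) X C.
  by exists c1, c2, c3.
exists _, m1, m2, m3; split => // r b1 b2 b3 bX.
have [bC|Cb] := leP (cp_cost b1 b2 b3) C.
  have [d1 [d2 [d3 [dX dC dcost]]]] := reduce _ _ _ _ bX bC.
  exact: le_trans (mmin _ _ _ dX dC) dcost.
exact: le_trans (mmin _ _ _ cX cC) (le_trans ccost (ltW (le_lt_trans tC Cb))).
Qed.

Lemma tnuclear_attained :
  exists r (a1 : 'I_r -> 'I_n1 -> R) a2 a3,
    is_cp_decomp X a1 a2 a3 /\ cp_cost a1 a2 a3 = tnuclear X.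
Proof.
have [r [a1 [a2 [a3 [aX amin]]]]] := cp_cost_min_exists.
exists r, a1, a2, a3; split => //; apply/le_anti; rewrite tnuclear_le_cp_cost // andbT.
apply: lb_le_inf; first by exists (cp_cost a1 a2 a3), r, a1, a2, a3.
by move=> _ [r' [b1 [b2 [b3 [bX ->]]]]]; exact: amin.
Qed.

End NuclearNormAttained.

Section Factorization.
Variables (R : realType) (N1 J N3 D : nat) (X : tensor3 R N1 J N3).

Lemma mulmx_diag_entry m (A : 'M[R]_(m, D)) (B : 'M[R]_D) i d :
  is_diag_mx B -> (A *m B) i d = A i d * B d d.
Proof. by case/diag_mxP => b ->; rewrite mul_mx_diag !mxE eqxx mulr1n. Qed.

Lemma trmx_diag (B : 'M[R]_D) : is_diag_mx B -> B^T = B.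
Proof. by case/diag_mxP => b ->; exact: tr_diag_mx. Qed.

Lemma frob2E m (A : 'M[R]_(m, D)) : frob2 A = \sum_d colnorm A d ^+ 2.
Proof. by rewrite /frob2 exchange_big; apply: eq_bigr => d _; rewrite sqr_vnorm2. Qed.

Lemma frob2_mul_diag m (A : 'M[R]_(m, D)) (B : 'M[R]_D) :
  is_diag_mx B -> frob2 (A *m B) = \sum_d colnorm A d ^+ 2 * B d d ^+ 2.
Proof.
move=> Bd; rewrite frob2E; apply: eq_bigr => d _; rewrite !sqr_vnorm2 mulr_suml.
by apply: eq_bigr => i _; rewrite mulmx_diag_entry // exprMn.
Qed.

Lemma colnorm_matrix m (a : 'I_D -> 'I_m -> R) d :
  colnorm (\matrix_(i, d') a d' i) d = vnorm2 (a d).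
Proof. by rewrite /colnorm; congr vnorm2; apply: funext => i; rewrite mxE. Qed.

Lemma rnorm_diag_row (a : 'I_D -> 'I_J -> R) d :
  rnorm (fun j => diag_mx (\row_d' a d' j)) d = vnorm2 (a d).
Proof. by rewrite /rnorm; congr vnorm2; apply: funext => j; rewrite !mxE eqxx mulr1n. Qed.

Lemma cp_decomp_factorization (a1 : 'I_D -> 'I_N1 -> R) a2 a3 :
  is_cp_decomp X a1 a2 a3 ->
  is_factorization X (\matrix_(i, d) a1 d i) (\matrix_(k, d) a3 d k)
    (fun j => diag_mx (\row_d a2 d j)).
Proof.
move=> aX; split => j; first exact: diag_mx_is_diag.
apply/matrixP => i k; rewrite /slice mul_mx_diag !mxE aX.
by apply: eq_bigr => d _; rewrite !mxE.
Qed.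

Lemma objective_term_sos (s a r b : R) :
  a ^+ 2 * r ^+ 2 + s ^+ 2 * b ^+ 2 + b ^+ 2 * r ^+ 2 + s ^+ 2 * a ^+ 2 =
  4 * s * (a * r * b) + ((a * r - s * b) ^+ 2 + (b * r - s * a) ^+ 2).
Proof. by ring. Qed.

Variables (U : 'M[R]_(N1, D)) (V : 'M[R]_(N3, D)) (Rj : 'I_J -> 'M[R]_D).

Lemma factorization_cp_decomp : is_factorization X U V Rj ->
  is_cp_decomp X (fun d i => U i d) (fun d j => Rj j d d) (fun d k => V k d).
Proof.
move=> [Rd XE] i j k; have := congr1 (fun A : 'M[R]_(N1, N3) => A i k) (XE j).
rewrite /slice mxE => ->.
by rewrite mxE; apply: eq_bigr => d _; rewrite mulmx_diag_entry ?Rd // mxE.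
Qed.

Hypothesis Rj_diag : forall j, is_diag_mx (Rj j).

Definition balance_defect d : R :=
  (colnorm U d * rnorm Rj d - Num.sqrt J%:R * colnorm V d) ^+ 2 +
  (colnorm V d * rnorm Rj d - Num.sqrt J%:R * colnorm U d) ^+ 2.

Lemma objectiveE : objective U V Rj =
  \sum_d colnorm U d * rnorm Rj d * colnorm V d +
  (4 * Num.sqrt J%:R)^-1 * \sum_d balance_defect d.
Proof.
rewrite /objective; set s := Num.sqrt J%:R.
have -> : \sum_j (frob2 (U *m Rj j) + frob2 V + frob2 (V *m (Rj j)^T) + frob2 U) =
    \sum_d (4 * s * (colnorm U d * rnorm Rj d * colnorm V d) + balance_defect d).
  transitivity (\sum_d \sum_j (colnorm U d ^+ 2 * Rj j d d ^+ 2 + colnorm V d ^+ 2 +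
                               colnorm V d ^+ 2 * Rj j d d ^+ 2 + colnorm U d ^+ 2)).
    rewrite exchange_big; apply: eq_bigr => j _.
    by rewrite trmx_diag // !frob2_mul_diag // !frob2E -!big_split.
  apply: eq_bigr => d _; rewrite -objective_term_sos [s ^+ 2]sqr_sqrtr ?ler0n //.
  rewrite !big_split /= -!mulr_sumr !sumr_const card_ord.
  by rewrite -[\sum_j Rj j d d ^+ 2]sqr_vnorm2 -/(rnorm Rj d); ring.
rewrite big_split /= -mulr_sumr mulrDr mulrA.
have [J0|J_gt0] := eqVneq J 0%N.
  have s0 : s = 0 by rewrite /s J0 sqrtr0.
  rewrite s0 mulr0 invr0 !mul0r !addr0 big1 // => d _.
  by rewrite /rnorm (vnorm2_dim0 _ J0) mulr0 mul0r.
by rewrite mulVf ?mul1r // mulf_neq0 // sqrtr_eq0 -ltNge ltr0n lt0n.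
Qed.

Lemma cp_cost_le_objective :
  \sum_d colnorm U d * rnorm Rj d * colnorm V d <= objective U V Rj.
Proof.
rewrite objectiveE lerDl mulr_ge0 ?invr_ge0 ?mulr_ge0 ?sqrtr_ge0 //.
by apply: sumr_ge0 => d _; rewrite addr_ge0 ?sqr_ge0.
Qed.

Lemma objective_balanced :
  objective U V Rj = \sum_d colnorm U d * rnorm Rj d * colnorm V d ->
  forall d, colnorm U d * rnorm Rj d = Num.sqrt J%:R * colnorm V d /\
            colnorm V d * rnorm Rj d = Num.sqrt J%:R * colnorm U d.
Proof.
have [J0 _ d|J_gt0] := eqVneq J 0%N.
  have s0 : Num.sqrt J%:R = 0 :> R by rewrite J0 sqrtr0.
  by rewrite /rnorm (vnorm2_dim0 _ J0) s0 !mulr0 !mul0r.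
rewrite objectiveE => /eqP; rewrite -subr_eq0 addrAC subrr add0r mulf_eq0 invr_eq0.
rewrite mulf_eq0 pnatr_eq0 sqrtr_eq0 leNgt ltr0n lt0n J_gt0 /= => /eqP defect0 d.
have /eqP := @psumr_eq0P _ _ predT _
  (fun d _ => addr_ge0 (sqr_ge0 _) (sqr_ge0 _)) defect0 d isT.
by rewrite paddr_eq0 ?sqr_ge0 // !sqrf_eq0 !subr_eq0 => /andP[/eqP -> /eqP ->].
Qed.

End Factorization.

Lemma objective_attained (R : realType) (N1 J N3 : nat) (X : tensor3 R N1 J N3) :
  exists (D : nat) (U : 'M[R]_(N1, D)) (V : 'M[R]_(N3, D)) (Rj : 'I_J -> 'M[R]_D),
    is_factorization X U V Rj /\ objective U V Rj = tnuclear X.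
Proof.
have [r [a1 [a2 [a3 [aX <-]]]]] := tnuclear_attained X.
have [J0|J_gt0] := eqVneq J 0%N.
  have s0 : Num.sqrt J%:R = 0 :> R by rewrite J0 sqrtr0.
  exists 0%N, 0, 0, (fun=> 0); split; first by split => j; exfalso; case: j => n; rewrite J0.
  rewrite /objective s0 mulr0 invr0 mul0r /cp_cost big1 // => l _.
  by rewrite /rank_one_cost (vnorm2_dim0 _ J0) mulr0 mul0r.
pose s : R := Num.sqrt J%:R; have s_gt0 : 0 < s by rewrite sqrtr_gt0 ltr0n lt0n.
pose t l := Num.sqrt (rank_one_cost (a1 l) (a2 l) (a3 l) / s).
have [l m0|b1 [b2 [b3 [bX bcost bnorm]]]] :=
  cp_decomp_rescale (x := t) (y := fun=> s) (z := t) aX.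
  have m_gt0 : 0 < rank_one_cost (a1 l) (a2 l) (a3 l) by rewrite lt_def m0 rank_one_cost_ge0.
  split; rewrite ?sqrtr_gt0 ?divr_gt0 ?ltr0n ?lt0n //.
  by rewrite mulrAC -expr2 sqr_sqrtr ?divfK ?gt_eqF // ltW // divr_gt0.
exists r, (\matrix_(i, d) b1 d i), (\matrix_(k, d) b3 d k), (fun j => diag_mx (\row_d b2 d j)).
split; first exact: cp_decomp_factorization bX.
rewrite -bcost objectiveE // [Y in _ * Y]big1 ?mulr0 ?addr0 => [|d _].
  by apply: eq_bigr => d _; rewrite !colnorm_matrix rnorm_diag_row.
rewrite /balance_defect !colnorm_matrix rnorm_diag_row.
case: (bnorm d); case: ifP => _ [-> -> ->];
  by rewrite -/s ?mulr0 ?[t d * s]mulrC subrr expr0n addr0.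
Qed.

Theorem theorem1 (R : realType) (N1 J N3 : nat) (X : tensor3 R N1 J N3) :
  (forall (D : nat) (U : 'M[R]_(N1, D)) (V : 'M[R]_(N3, D)) (Rj : 'I_J -> 'M[R]_D),
      is_factorization X U V Rj -> tnuclear X <= objective U V Rj) /\
  (exists (D : nat) (U : 'M[R]_(N1, D)) (V : 'M[R]_(N3, D)) (Rj : 'I_J -> 'M[R]_D),
      is_factorization X U V Rj /\ objective U V Rj = tnuclear X) /\
  (forall (D : nat) (U : 'M[R]_(N1, D)) (V : 'M[R]_(N3, D)) (Rj : 'I_J -> 'M[R]_D),
      is_factorization X U V Rj -> objective U V Rj = tnuclear X ->
      forall d : 'I_D,
        colnorm U d * rnorm Rj d = Num.sqrt (J%:R) * colnorm V d /\
        colnorm V d * rnorm Rj d = Num.sqrt (J%:R) * colnorm U d).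
Proof.
have tnuclear_le_cost D (U : 'M[R]_(N1, D)) V Rj : is_factorization X U V Rj ->
    tnuclear X <= \sum_d colnorm U d * rnorm Rj d * colnorm V d.
  by move=> UVR; exact: tnuclear_le_cp_cost (factorization_cp_decomp UVR).
split; last split.
- move=> D U V Rj UVR; apply: le_trans (cp_cost_le_objective U V UVR.1).
  exact: tnuclear_le_cost.
- exact: objective_attained.
- move=> D U V Rj UVR opt; apply: objective_balanced UVR.1 _.
  apply/le_anti; rewrite (cp_cost_le_objective U V UVR.1) andbT opt.
  exact: tnuclear_le_cost.
Qed.
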